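(* Let $(d_i)_{i\ge1}$ be an alternate Lyndon word, $M$ its alternate Lyndon system, $L_M$ its language, and $\log\beta$ its entropy, with $\beta>1$. Suppose $i\ge1$ and $j$ is a letter such that $d_1d_2\cdots d_{i-1}j\in L_M$ and $(-1)^i(d_i-j)<0$. Then $$f_\beta(d_1d_2\cdots d_{i-1}j)\ge-\frac{\beta}{\beta+1}.$$
   Context: Alternate order: for two words $x=x_1x_2\cdots$, $y=y_1y_2\cdots$ over a finite alphabet of integers, $x\prec y$ iff there is $k$ with $x_i=y_i$ for all $i<k$ and $(-1)^k(x_k-y_k)<0$; $x\preceq y$ iff $x=y$ or $x\prec y$. An alternate Lyndon word is an infinite word $(d_i)_{i\ge1}$ with $d_1d_2\cdots\preceq d_nd_{n+1}\cdots$ for all $n\ge1$. Its alternate Lyndon system $M$ is the set of infinite words $x$ over $\{0,\dots,d_1\}$ with $d_1d_2\cdots\preceq x_kx_{k+1}\cdots$ for all $k\ge1$; $L_M$ is the set of its finite factors; its entropy is $\lim_n\frac1n\log H_n$ with $H_n$ the number of words of length $n$ in $L_M$. For a finite word, $f_\beta(x_1\cdots x_n)=\sum_{k=1}^n x_k(-\beta)^{-k}$. *)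

From Stdlib Require Import Reals ZArith List.
Import ListNotations.
Open Scope R_scope.

(* Infinite words are functions nat -> nat, 0-indexed: x i is the paper's x_{i+1}. *)
Definition iword := nat -> nat.

Definition shift (x : iword) (n : nat) : iword := fun i => x (n + i)%nat.

(* Alternate order: x < y iff there is k (1-based) with x_i = y_i for i<k and
   (-1)^k (x_k - y_k) < 0.  With 0-based k this is (-1)^(k+1). *)
Definition alt_lt (x y : iword) : Prop :=
  exists k : nat,
    (forall i, (i < k)%nat -> x i = y i) /\
    ((-1) ^ Z.of_nat (k + 1) * (Z.of_nat (x k) - Z.of_nat (y k)) < 0)%Z.

Definition alt_le (x y : iword) : Prop := (forall i, x i = y i) \/ alt_lt x y.

Definition alt_lyndon (d : iword) : Prop := forall n : nat, alt_le d (shift d n).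

Definition inM (d : iword) (x : iword) : Prop :=
  (forall i, (x i <= d 0%nat)%nat) /\ forall k : nat, alt_le d (shift x k).

Definition inLM (d : iword) (w : list nat) : Prop :=
  exists x, inM d x /\ exists k : nat,
    forall i, (i < length w)%nat -> nth i w 0%nat = x (k + i)%nat.

Definition count_words (d : iword) (n H : nat) : Prop :=
  exists l : list (list nat),
    NoDup l /\ (forall w, In w l <-> (length w = n /\ inLM d w)) /\ length l = H.

Definition has_entropy (d : iword) (e : R) : Prop :=
  exists H : nat -> nat,
    (forall n, count_words d n (H n)) /\
    Un_cv (fun n => ln (INR (H n)) / INR n) e.

(* f_beta(x_1 ... x_n) = sum_{k=1}^n x_k (-beta)^{-k};
   fbeta_from beta k w sums the letters of w with exponents -k, -(k+1), ... *)
Fixpoint fbeta_from (beta : R) (k : nat) (w : list nat) : R :=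
  match w with
  | [] => 0
  | a :: w' => INR a * / ((- beta) ^ k) + fbeta_from beta (S k) w'
  end.

Definition fbeta (beta : R) (w : list nat) : R := fbeta_from beta 1 w.

(* Let w = d_1 ... d_(i-1) j and suppose f_beta(w) < -beta/(beta+1); by continuity this persists for
   some beta' > beta.  On [l, l + 1), l = -beta'/(beta'+1), the alternate beta'-transformation
   T x = -beta' x - floor(-beta' x - l) yields digit expansions which are strictly increasing for the
   alternate order, so the expansion b of l is the least of them.
   - If d <= b, every expansion lies in M, and the floor(beta'^n) points l + t beta'^(-n) have pairwise
     distinct prefixes of length n, so the entropy is at least log beta' > log beta.
   - If b < d, every shift of d dominates b, which confines the value sum_k x_k (-beta')^(-k) of every
     shift x of d to [l, l + 1]; cutting the value of d after position i - 1 and using the sign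
     condition on j gives f_beta'(w) >= l, a contradiction. *)

From Pilot Require Import Defs.
From Stdlib Require Import Reals ZArith List.
From Stdlib Require Import Lra Lia Classical FunctionalExtensionality.
From Coquelicot Require Import Coquelicot.
Import ListNotations.
Open Scope R_scope.

Lemma IZR_pow_neg1 n : IZR ((-1) ^ Z.of_nat n) = (-1) ^ n.
Proof.
  induction n as [|n IH]; [reflexivity|].
  rewrite Nat2Z.inj_succ, Z.pow_succ_r, mult_IZR, IH by lia. simpl. ring.
Qed.

Lemma pow_neg1_cases n : (-1) ^ n = 1 \/ (-1) ^ n = -1.
Proof.
  induction n as [|n [IH|IH]]; simpl; [left| right | left]; try rewrite IH; ring.
Qed.

Lemma sign_diff_le (k a b : nat) :
  ((-1) ^ Z.of_nat k * (Z.of_nat a - Z.of_nat b) < 0)%Z ->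
  (-1) ^ k * (INR a - INR b) <= -1.
Proof.
  intro H. assert (Hz : ((-1) ^ Z.of_nat k * (Z.of_nat a - Z.of_nat b) <= -1)%Z) by lia.
  apply IZR_le in Hz. now rewrite mult_IZR, IZR_pow_neg1, minus_IZR, <- !INR_IZR_INZ in Hz.
Qed.

Lemma pow_opp_sign b k : (- b) ^ k = (-1) ^ k * b ^ k.
Proof. rewrite <- Rpow_mult_distr. f_equal. ring. Qed.

Lemma inv_opp_pow b k : (/ - b) ^ k = (-1) ^ k * (/ b) ^ k.
Proof. rewrite Rinv_opp. apply pow_opp_sign. Qed.

Lemma alt_lt_real x y : alt_lt x y -> exists k,
  (forall i, (i < k)%nat -> x i = y i) /\ (-1) ^ (k + 1) * (INR (x k) - INR (y k)) <= -1.
Proof. intros [k [Hpre Hk]]. exists k. split; [exact Hpre | now apply sign_diff_le]. Qed.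

Lemma alt_lt_intro x y k : (forall i, (i < k)%nat -> x i = y i) ->
  (-1) ^ (k + 1) * (INR (x k) - INR (y k)) < 0 -> alt_lt x y.
Proof.
  intros Hpre Hk. exists k. split; [exact Hpre|]. apply lt_IZR.
  now rewrite mult_IZR, IZR_pow_neg1, minus_IZR, <- !INR_IZR_INZ.
Qed.

Lemma alt_le_cases x y : alt_le x y -> x = y \/ alt_lt x y.
Proof. intros [E|H]; [left; now apply functional_extensionality | now right]. Qed.

Lemma alt_lt_trans x y z : alt_lt x y -> alt_lt y z -> alt_lt x z.
Proof.
  intros Hxy Hyz.
  destruct (alt_lt_real _ _ Hxy) as [k1 [E1 S1]], (alt_lt_real _ _ Hyz) as [k2 [E2 S2]].
  assert (Hpre : forall i, (i < Nat.min k1 k2)%nat -> x i = z i).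
  { intros i Hi. rewrite E1, E2 by lia. reflexivity. }
  destruct (lt_eq_lt_dec k1 k2) as [[Hlt|<-]|Hlt].
  - apply (alt_lt_intro _ _ k1); [now rewrite Nat.min_l in Hpre by lia|].
    rewrite <- (E2 k1 Hlt). lra.
  - apply (alt_lt_intro _ _ k1); [now rewrite Nat.min_id in Hpre|]. lra.
  - apply (alt_lt_intro _ _ k2); [now rewrite Nat.min_r in Hpre by lia|].
    rewrite (E1 k2 Hlt). lra.
Qed.

Lemma alt_lt_le_trans x y z : alt_lt x y -> alt_le y z -> alt_lt x z.
Proof. intros H [<-|]%alt_le_cases; [exact H | eapply alt_lt_trans; eauto]. Qed.

Lemma alt_le_trans x y z : alt_le x y -> alt_le y z -> alt_le x z.
Proof. intros [<-|H]%alt_le_cases Hyz; [exact Hyz | right; eapply alt_lt_le_trans; eauto]. Qed.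

Lemma alt_trichotomy x y : x = y \/ alt_lt x y \/ alt_lt y x.
Proof.
  destruct (classic (exists n, x n <> y n)) as [Hne|Heq].
  2: { left. apply functional_extensionality. intro n.
       destruct (Nat.eq_dec (x n) (y n)); [assumption | exfalso; eauto]. }
  right.
  destruct (dec_inh_nat_subset_has_unique_least_element (fun n => x n <> y n)) as [k [[Hk Hmin] _]];
    [intro n; destruct (Nat.eq_dec (x n) (y n)); tauto | exact Hne |].
  assert (Hpre : forall i, (i < k)%nat -> x i = y i).
  { intros i Hi. destruct (Nat.eq_dec (x i) (y i)) as [E|Hxy]; [exact E|].
    specialize (Hmin i Hxy). lia. }
  assert (Hsgn : (-1) ^ (k + 1) * (INR (x k) - INR (y k)) <> 0).
  { apply Rmult_integral_contrapositive. split; [apply pow_nonzero; lra|].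
    intro E. apply Hk, INR_eq. lra. }
  destruct (Rtotal_order ((-1) ^ (k + 1) * (INR (x k) - INR (y k))) 0) as [Hneg|[E|Hpos]];
    [left | contradiction | right].
  - exact (alt_lt_intro _ _ k Hpre Hneg).
  - apply (alt_lt_intro _ _ k); [intros i Hi; symmetry; auto | lra].
Qed.

Lemma alt_le_head d y : alt_le d y -> (y 0 <= d 0)%nat.
Proof.
  intros [<-|H]%alt_le_cases; [lia|].
  destruct (alt_lt_real _ _ H) as [[|k] [Hpre Hk]].
  - simpl in Hk. apply INR_le. lra.
  - rewrite Hpre by lia. lia.
Qed.

Lemma shift_shift (x : iword) m k : Defs.shift (Defs.shift x m) k = Defs.shift x (m + k).
Proof. apply functional_extensionality. intro i. unfold Defs.shift. f_equal. lia. Qed.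

Definition nfloor (z : R) : nat := Z.to_nat (Int_part z).

Lemma nfloor_spec z : 0 <= z -> INR (nfloor z) <= z < INR (nfloor z) + 1.
Proof.
  intro Hz. destruct (base_Int_part z) as [B1 B2].
  assert (Hgt : IZR (-1) < IZR (Int_part z)) by lra.
  assert (Hp : (0 <= Int_part z)%Z) by (apply lt_IZR in Hgt; lia).
  unfold nfloor. rewrite INR_IZR_INZ, Z2Nat.id by exact Hp. lra.
Qed.

Lemma nat_above r : exists n : nat, r < INR n.
Proof.
  destruct (archimed (Rabs r)) as [Hup _].
  assert (Hpos : (0 <= up (Rabs r))%Z) by (apply le_IZR; pose proof (Rabs_pos r); lra).
  exists (Z.to_nat (up (Rabs r))). rewrite INR_IZR_INZ, Z2Nat.id by exact Hpos.
  pose proof (Rle_abs r). lra.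
Qed.

Lemma pow_unbounded b C : 1 < b -> exists n, C < b ^ n.
Proof.
  intro Hb. destruct (nat_above (C / (b - 1))) as [n Hn]. exists n.
  assert (Hlin : 1 + INR n * (b - 1) <= b ^ n)
    by (replace b with (1 + (b - 1)) at 2 by ring; apply Rle_pow_lin; lra).
  apply (Rmult_lt_compat_r (b - 1)) in Hn; [|lra].
  unfold Rdiv in Hn. rewrite Rmult_assoc, Rinv_l, Rmult_1_r in Hn by lra. lra.
Qed.

Lemma le_0_of_geometric_bound b z C : 1 < b -> (forall k, z <= C * (/ b) ^ k) -> z <= 0.
Proof.
  intros Hb H. apply Rnot_lt_le. intro Hz.
  destruct (pow_unbounded b (C / z) Hb) as [k Hk]. specialize (H k).
  rewrite pow_inv in H. assert (0 < b ^ k) by (apply pow_lt; lra).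
  apply (Rmult_le_compat_r (b ^ k)) in H; [|lra]. rewrite Rmult_assoc, Rinv_l in H by lra.
  apply (Rmult_lt_compat_r z) in Hk; [|lra].
  unfold Rdiv in Hk. rewrite Rmult_assoc, Rinv_l in Hk by lra. lra.
Qed.

Lemma nat_eq_of_close a b : Rabs (INR a - INR b) < 1 -> a = b.
Proof.
  intro H. apply Rabs_def2 in H as [H1 H2].
  destruct (lt_eq_lt_dec a b) as [[Hab|Hab]|Hab]; [exfalso| exact Hab | exfalso];
    apply le_INR in Hab; rewrite S_INR in Hab; lra.
Qed.

Lemma nth_map_seq (f : nat -> nat) n i : (i < n)%nat -> nth i (map f (seq 0 n)) 0%nat = f i.
Proof.
  intro Hi. rewrite (nth_indep _ _ (f 0%nat)) by now rewrite length_map, length_seq.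
  now rewrite map_nth, seq_nth.
Qed.

Lemma prefix_inLM d x n : inM d x -> inLM d (map x (seq 0 n)).
Proof.
  intro Hx. exists x. split; [exact Hx|]. exists 0%nat. intros i Hi.
  rewrite length_map, length_seq in Hi. now rewrite nth_map_seq.
Qed.

Lemma count_words_ge d n H ws : NoDup ws -> (forall w, In w ws -> length w = n /\ inLM d w) ->
  count_words d n H -> (length ws <= H)%nat.
Proof.
  intros Hnd Hws [l [_ [Hl <-]]]. apply NoDup_incl_length; [exact Hnd|].
  intros w Hw. now apply Hl, Hws.
Qed.

Lemma fbeta_from_app b k u v :
  fbeta_from b k (u ++ v) = fbeta_from b k u + fbeta_from b (k + length u) v.
Proof.
  revert k. induction u as [|a u IH]; intro k; simpl; [rewrite Nat.add_0_r; ring|].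
  rewrite IH, Nat.add_succ_r. simpl. ring.
Qed.

Section Alternate_beta_transformation.

Variable be : R.
Hypothesis be_gt1 : 1 < be.

Definition lend := - (be / (be + 1)).
Definition in_dom x := lend <= x < lend + 1.
Definition digit x := nfloor (- be * x - lend).
Definition alt_map x := - be * x - INR (digit x).
Definition orbit x k := Nat.iter k alt_map x.
Definition expansion x : iword := fun k => digit (orbit x k).

Lemma lend_range : -1 < lend < 0.
Proof.
  unfold lend. replace (be / (be + 1)) with (1 - / (be + 1)) by (field; lra).
  assert (0 < / (be + 1)) by (apply Rinv_0_lt_compat; lra).
  assert (/ (be + 1) < 1) by (rewrite <- Rinv_1; apply Rinv_lt_contravar; lra).
  lra.
Qed.

Lemma lend_scaled : be * (lend + 1) = - lend.
Proof. unfold lend. field. lra. Qed.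

Lemma lend_in_dom : in_dom lend.
Proof. unfold in_dom. lra. Qed.

Lemma digit_spec x : in_dom x -> INR (digit x) <= - be * x - lend < INR (digit x) + 1.
Proof.
  intros [_ Hx]. apply nfloor_spec.
  pose proof lend_scaled. pose proof lend_range.
  assert (be * x <= be * (lend + 1)) by (apply Rmult_le_compat_l; lra). lra.
Qed.

Lemma alt_map_in_dom x : in_dom x -> in_dom (alt_map x).
Proof. intro Hx. pose proof (digit_spec x Hx). unfold in_dom, alt_map. lra. Qed.

Lemma orbit_in_dom x k : in_dom x -> in_dom (orbit x k).
Proof. intro Hx. induction k as [|k IH]; [exact Hx | now apply alt_map_in_dom]. Qed.

Lemma digit_le_be x : in_dom x -> INR (digit x) <= be.
Proof.
  intros Hx. pose proof (digit_spec x Hx). pose proof lend_scaled. destruct Hx.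
  assert (be * lend <= be * x) by (apply Rmult_le_compat_l; lra). lra.
Qed.

Lemma digit_antitone x y : in_dom x -> in_dom y -> x < y -> (digit y <= digit x)%nat.
Proof.
  intros Hx Hy Hxy. pose proof (digit_spec x Hx). pose proof (digit_spec y Hy).
  assert (be * x < be * y) by (apply Rmult_lt_compat_l; lra).
  apply Nat.lt_succ_r, INR_lt. rewrite S_INR. lra.
Qed.

Lemma orbit_step x k : orbit x k = / - be * (INR (expansion x k) + orbit x (S k)).
Proof. unfold expansion. simpl. unfold alt_map. field. lra. Qed.

Lemma shift_expansion x m : Defs.shift (expansion x) m = expansion (orbit x m).
Proof.
  apply functional_extensionality. intro i. unfold Defs.shift, expansion, orbit.
  now rewrite Nat.add_comm, Nat.iter_add.
Qed.


Lemma orbit_diff x y n : (forall i, (i < n)%nat -> expansion x i = expansion y i) ->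
  orbit y n - orbit x n = (- be) ^ n * (y - x).
Proof.
  induction n as [|n IH]; intro Hpre; [simpl; ring|].
  assert (E : digit (orbit x n) = digit (orbit y n)) by (apply (Hpre n); lia).
  simpl. unfold alt_map. rewrite E.
  replace (- be * orbit y n - INR (digit (orbit y n)) - (- be * orbit x n - INR (digit (orbit y n))))
    with (- be * (orbit y n - orbit x n)) by ring.
  rewrite IH by (intros; apply Hpre; lia). ring.
Qed.

(* The n-th iterate multiplies distances by be^n and stays in an interval of length 1. *)
Lemma prefix_close x y n : in_dom x -> in_dom y ->
  (forall i, (i < n)%nat -> expansion x i = expansion y i) -> be ^ n * Rabs (y - x) < 1.
Proof.
  intros Hx Hy Hpre.
  pose proof (orbit_in_dom x n Hx) as [Hx1 Hx2]. pose proof (orbit_in_dom y n Hy) as [Hy1 Hy2].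
  assert (E : be ^ n * Rabs (y - x) = Rabs (orbit y n - orbit x n)).
  { rewrite orbit_diff, Rabs_mult, <- RPow_abs, Rabs_Ropp, (Rabs_pos_eq be) by (auto; lra).
    reflexivity. }
  rewrite E. apply Rabs_def1; lra.
Qed.

Lemma expansion_strict_mono x y : in_dom x -> in_dom y -> x < y -> alt_lt (expansion x) (expansion y).
Proof.
  intros Hx Hy Hxy.
  destruct (alt_trichotomy (expansion x) (expansion y)) as [E|[Hlt|Hgt]];
    [exfalso | exact Hlt | exfalso].
  - destruct (pow_unbounded be (/ (y - x)) be_gt1) as [n Hn].
    pose proof (prefix_close x y n Hx Hy (fun i _ => f_equal (fun w => w i) E)) as Hc.
    rewrite Rabs_pos_eq in Hc by lra.
    apply (Rmult_lt_compat_r (y - x)) in Hn; [|lra]. rewrite Rinv_l in Hn by lra. lra.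
  - destruct (alt_lt_real _ _ Hgt) as [k [Hpre Hk]].
    pose proof (orbit_diff x y k (fun i Hi => eq_sym (Hpre i Hi))) as Hd.
    assert (0 < be ^ k * (y - x)) by (apply Rmult_lt_0_compat; [apply pow_lt|]; lra).
    pose proof (orbit_in_dom x k Hx). pose proof (orbit_in_dom y k Hy).
    unfold expansion in Hk. rewrite pow_add in Hk. rewrite pow_opp_sign in Hd.
    destruct (pow_neg1_cases k) as [s|s]; rewrite s in Hd, Hk.
    + assert (Hdig : (digit (orbit y k) <= digit (orbit x k))%nat) by (apply digit_antitone; auto; lra).
      apply le_INR in Hdig. simpl in Hk. lra.
    + assert (Hdig : (digit (orbit x k) <= digit (orbit y k))%nat) by (apply digit_antitone; auto; lra).
      apply le_INR in Hdig. simpl in Hk. lra.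
Qed.

Lemma expansion_lend_min y : in_dom y -> alt_le (expansion lend) (expansion y).
Proof.
  intro Hy. destruct (Req_dec y lend) as [->|Hne]; [now left|].
  right. apply expansion_strict_mono; [exact lend_in_dom | exact Hy |]. destruct Hy. lra.
Qed.

Lemma expansion_inM d x : alt_le d (expansion lend) -> in_dom x -> inM d (expansion x).
Proof.
  intros Hd Hx.
  assert (Hshift : forall k, alt_le d (Defs.shift (expansion x) k)).
  { intro k. rewrite shift_expansion. eapply alt_le_trans; [exact Hd|].
    apply expansion_lend_min, orbit_in_dom, Hx. }
  split; [|exact Hshift]. intro i.
  pose proof (alt_le_head _ _ (Hshift i)) as Hi. unfold Defs.shift in Hi. now rewrite Nat.add_0_r in Hi.
Qed.

Lemma count_words_lower d n H : alt_le d (expansion lend) -> count_words d n H -> be ^ n - 1 <= INR H.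
Proof.
  intros Hd Hcount.
  set (z := be ^ n). assert (Hz : 1 <= z) by (apply pow_R1_Rle; lra).
  set (N := nfloor z). pose proof (nfloor_spec z ltac:(lra)) as HN. fold N in HN.
  set (pt := fun t : nat => lend + INR t / z).
  set (word := fun t => map (expansion (pt t)) (seq 0 n)).
  assert (Hpt : forall t, In t (seq 0 N) -> in_dom (pt t)).
  { intros t Ht%in_seq. assert (Ht' : INR (S t) <= INR N) by (apply le_INR; lia). rewrite S_INR in Ht'.
    assert (0 <= INR t / z < 1); [|unfold in_dom, pt; lra].
    split; [apply Rdiv_le_0_compat; [apply pos_INR | lra]|].
    apply (Rmult_lt_reg_r z); [lra|]. unfold Rdiv. rewrite Rmult_assoc, Rinv_l by lra. lra. }
  assert (Hinj : ForallPairs (fun a b => word a = word b -> a = b) (seq 0 N)).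
  { intros a b Ha Hb Hab. apply nat_eq_of_close.
    assert (Hpre : forall i, (i < n)%nat -> expansion (pt a) i = expansion (pt b) i).
    { intros i Hi. apply (proj1 map_ext_in_iff Hab), in_seq. lia. }
    pose proof (prefix_close _ _ n (Hpt a Ha) (Hpt b Hb) Hpre) as Hc. fold z in Hc.
    replace (pt b - pt a) with ((INR b - INR a) / z) in Hc by (unfold pt; field; lra).
    unfold Rdiv in Hc.
    rewrite Rabs_mult, (Rabs_pos_eq (/ z)) in Hc by (apply Rlt_le, Rinv_0_lt_compat; lra).
    rewrite Rabs_minus_sym. replace (z * (Rabs (INR b - INR a) * / z)) with (Rabs (INR b - INR a)) in Hc
      by (field; lra). exact Hc. }
  assert (Hlen : (length (map word (seq 0 N)) <= H)%nat).
  { apply (count_words_ge d n); [|intros w [t [<- Ht]]%in_map_iff | exact Hcount].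
    - apply NoDup_map_NoDup_ForallPairs; [exact Hinj | apply seq_NoDup].
    - split; [unfold word; now rewrite length_map, length_seq|].
      apply prefix_inLM, expansion_inM, Hpt; assumption. }
  rewrite length_map, length_seq in Hlen. apply le_INR in Hlen. fold z. lra.
Qed.

Lemma expansion_le x i : in_dom x -> (expansion x i <= nfloor be)%nat.
Proof.
  intro Hx. pose proof (digit_le_be _ (orbit_in_dom x i Hx)). pose proof (nfloor_spec be ltac:(lra)).
  apply Nat.lt_succ_r, INR_lt. rewrite S_INR. unfold expansion. lra.
Qed.

Definition value (x : iword) := Series (fun k => INR (x k) * (/ - be) ^ S k).

Lemma inv_be_range : 0 < / be < 1.
Proof. split; [apply Rinv_0_lt_compat; lra | rewrite <- Rinv_1; apply Rinv_lt_contravar; lra]. Qed.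

Lemma Rabs_inv_opp_be : Rabs (/ - be) = / be.
Proof. rewrite Rinv_opp, Rabs_Ropp, Rabs_pos_eq; [reflexivity | apply Rlt_le, inv_be_range]. Qed.


Section Bounded_word.

Variables (A : nat) (x : iword).
Hypothesis x_le : forall i, (x i <= A)%nat.

Lemma value_term_bound k : Rabs (INR (x k) * (/ - be) ^ S k) <= INR A * (/ be) ^ S k.
Proof.
  rewrite Rabs_mult, <- RPow_abs, Rabs_inv_opp_be, Rabs_pos_eq by apply pos_INR.
  apply Rmult_le_compat_r; [apply pow_le, Rlt_le, inv_be_range | apply le_INR, x_le].
Qed.

Lemma geometric_summable : ex_series (fun k => INR A * (/ be) ^ S k).
Proof.
  apply (ex_series_ext (fun k => (INR A * / be) * (/ be) ^ k)); [intro k; simpl; ring|].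
  apply (@ex_series_scal_l R_AbsRing R_NormedModule), ex_series_geom.
  pose proof inv_be_range. rewrite Rabs_pos_eq; lra.
Qed.

Lemma value_abs_summable : ex_series (fun k => Rabs (INR (x k) * (/ - be) ^ S k)).
Proof.
  apply (@ex_series_le R_AbsRing R_CompleteNormedModule _ (fun k => INR A * (/ be) ^ S k));
    [intro k | exact geometric_summable].
  unfold norm; simpl. unfold abs; simpl. rewrite Rabs_Rabsolu. apply value_term_bound.
Qed.

Lemma value_summable : ex_series (fun k => INR (x k) * (/ - be) ^ S k).
Proof.
  exact (@ex_series_le R_AbsRing R_CompleteNormedModule _ _ value_term_bound geometric_summable).
Qed.

Lemma value_abs_le : Rabs (value x) <= INR A / (be - 1).
Proof.
  pose proof inv_be_range.
  eapply Rle_trans; [apply Series_Rabs, value_abs_summable|].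
  eapply Rle_trans;
    [apply (Series_le _ _ (fun k => conj (Rabs_pos _) (value_term_bound k)) geometric_summable)|].
  rewrite (Series_ext _ (fun k => (INR A * / be) * (/ be) ^ k)) by (intro; simpl; ring).
  rewrite Series_scal_l, Series_geom by (rewrite Rabs_pos_eq; lra).
  right. field. lra.
Qed.

End Bounded_word.

Lemma value_step A x m : (forall i, (x i <= A)%nat) ->
  value (Defs.shift x m) = / - be * (INR (x m) + value (Defs.shift x (S m))).
Proof.
  intro Hx. unfold value. rewrite Series_incr_1 by (apply (value_summable A); intro; apply Hx).
  rewrite (Series_ext _ (fun k => / - be * (INR (Defs.shift x (S m) k) * (/ - be) ^ S k))).
  - rewrite Series_scal_l. unfold Defs.shift. rewrite Nat.add_0_r. simpl. ring.
  - intro k. unfold Defs.shift. rewrite Nat.add_succ_r. simpl. ring.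
Qed.

Lemma value_prefix A x n : (forall i, (x i <= A)%nat) ->
  value x = fbeta be (map x (seq 0 n)) + (/ - be) ^ n * value (Defs.shift x n).
Proof.
  intro Hx. induction n as [|n IH]; [unfold fbeta; simpl; now rewrite Rmult_1_l, Rplus_0_l|].
  rewrite IH, (value_step A x n Hx). unfold fbeta.
  rewrite seq_S, map_app, fbeta_from_app, length_map, length_seq. simpl.
  rewrite Rinv_mult, pow_inv. ring.
Qed.

Lemma value_unique A x (r : nat -> R) C : (forall i, (x i <= A)%nat) -> (forall k, Rabs (r k) <= C) ->
  (forall k, r k = / - be * (INR (x k) + r (S k))) -> r 0%nat = value x.
Proof.
  intros Hx Hr Hrec.
  set (e := fun k => r k - value (Defs.shift x k)).
  assert (Hiter : forall k, e 0%nat = (/ - be) ^ k * e k).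
  { induction k as [|k IH]; [simpl; ring|].
    rewrite IH. unfold e. rewrite (Hrec k), (value_step A x k Hx). simpl. ring. }
  assert (Hgeom : forall k, Rabs (e 0%nat) <= (C + INR A / (be - 1)) * (/ be) ^ k).
  { intro k. rewrite (Hiter k), Rabs_mult, <- RPow_abs, Rabs_inv_opp_be, Rmult_comm.
    apply Rmult_le_compat_r; [apply pow_le, Rlt_le, inv_be_range|].
    pose proof (Hr k) as Hrk.
    pose proof (value_abs_le A (Defs.shift x k) (fun i => Hx (k + i)%nat)) as Hv.
    unfold e. apply Rabs_le. apply Rabs_le_between in Hrk, Hv. lra. }
  pose proof (le_0_of_geometric_bound be _ _ be_gt1 Hgeom). pose proof (Rabs_pos (e 0%nat)).
  assert (He : e 0%nat = 0) by (apply Rabs_eq_0; lra). exact (Rminus_diag_uniq _ _ He).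
Qed.

Lemma value_expansion x : in_dom x -> value (expansion x) = x.
Proof.
  intro Hx. symmetry. apply (value_unique (nfloor be) _ (orbit x) 1).
  - intro i. now apply expansion_le.
  - intro k. destruct (orbit_in_dom x k Hx). pose proof lend_range. apply Rabs_le. lra.
  - exact (orbit_step x).
Qed.

Definition admissible A (x : iword) :=
  (forall i, (x i <= A)%nat) /\ forall k, alt_le (expansion lend) (Defs.shift x k).

Lemma admissible_shift A x m : admissible A x -> admissible A (Defs.shift x m).
Proof.
  intros [Hle Hge]. split; [intro i; apply Hle|].
  intro k. rewrite shift_shift. apply Hge.
Qed.

Definition value_within A E := forall x, admissible A x -> lend - E <= value x <= lend + 1 + E.

Lemma value_within_init A : value_within A (INR A / (be - 1)).
Proof.
  intros x [Hle _]. pose proof (value_abs_le A x Hle) as Hv. pose proof lend_range.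
  apply Rabs_le_between in Hv. lra.
Qed.

Lemma admissible_value_upper A E x : value_within A E -> admissible A x -> value x <= lend + 1 + E / be.
Proof.
  intros HE Hx. pose proof inv_be_range as Hinv.
  pose proof (HE _ (admissible_shift A x 1 Hx)) as [Hv1 _].
  change (value x) with (value (Defs.shift x 0)). rewrite (value_step A x 0 (proj1 Hx)), Rinv_opp.
  assert (Hlend : - lend * / be = lend + 1) by (rewrite <- lend_scaled; field; lra).
  assert (/ be * INR (x 0%nat) >= 0) by (apply Rle_ge, Rmult_le_pos; [lra | apply pos_INR]).
  assert (/ be * (value (Defs.shift x 1) - (lend - E)) >= 0) by (apply Rle_ge, Rmult_le_pos; lra).
  unfold Rdiv. lra.
Qed.

(* At the first letter where x differs from the expansion of lend, it differs by at least 1 in the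
   favourable direction, which absorbs the error E of the tail. *)
Lemma admissible_value_lower A E x :
  0 <= E -> value_within A E -> admissible A x -> lend - E / be <= value x.
Proof.
  intros HE0 HE Hx. pose proof inv_be_range as Hinv.
  assert (HEbe : 0 <= E / be) by (apply Rdiv_le_0_compat; lra).
  assert (Hbx : alt_le (expansion lend) x) by exact (proj2 Hx 0%nat).
  destruct (alt_le_cases _ _ Hbx) as [<-|Hlt].
  { rewrite (value_expansion _ lend_in_dom). lra. }
  destruct (alt_lt_real _ _ Hlt) as [k [Hpre Hk]].
  pose proof (value_prefix A x k (proj1 Hx)) as Vx.
  pose proof (value_prefix _ _ k (fun i => expansion_le lend i lend_in_dom)) as Vb.
  assert (Hsame : map x (seq 0 k) = map (expansion lend) (seq 0 k)).
  { apply map_ext_in. intros i Hi%in_seq. symmetry. apply Hpre. lia. }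
  rewrite Hsame, (value_step A x k (proj1 Hx)) in Vx.
  rewrite shift_expansion, (value_expansion _ (orbit_in_dom _ k lend_in_dom)), orbit_step,
    (value_expansion _ lend_in_dom) in Vb.
  pose proof (HE _ (admissible_shift A x (S k) Hx)) as Hv.
  pose proof (orbit_in_dom lend (S k) lend_in_dom) as [Ho1 Ho2].
  set (Z := INR (x k) - INR (expansion lend k) + (value (Defs.shift x (S k)) - orbit lend (S k))).
  assert (Hdiff : value x - lend = (/ - be) ^ S k * Z)
    by (rewrite Vb at 1; rewrite Vx; unfold Z; simpl; ring).
  rewrite inv_opp_pow in Hdiff. rewrite pow_add in Hk. simpl in Hk.
  set (p := (/ be) ^ S k) in Hdiff.
  assert (Hp : 0 < p <= / be).
  { unfold p. rewrite pow_inv. split; [apply Rinv_0_lt_compat, pow_lt; lra|].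
    apply Rinv_le_contravar; [lra|]. rewrite <- (pow_1 be) at 1. apply Rle_pow; [lra | lia]. }
  assert (HEp : E * p <= E * / be) by (apply Rmult_le_compat_l; lra).
  unfold Rdiv. simpl in Hdiff.
  destruct (pow_neg1_cases k) as [s|s]; rewrite s in Hdiff, Hk.
  - assert (p * (E - Z) >= 0) by (apply Rle_ge, Rmult_le_pos; unfold Z; lra). lra.
  - assert (p * (Z + E) >= 0) by (apply Rle_ge, Rmult_le_pos; unfold Z; lra). lra.
Qed.

Lemma value_within_contract A E : 0 <= E -> value_within A E -> value_within A (E / be).
Proof.
  intros HE0 HE x Hx.
  split; [apply (admissible_value_lower A) | apply (admissible_value_upper A)]; assumption.
Qed.

Lemma admissible_value_range A x : admissible A x -> lend <= value x <= lend + 1.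
Proof.
  intro Hx. set (E0 := INR A / (be - 1)).
  assert (HE0 : 0 <= E0) by (apply Rdiv_le_0_compat; [apply pos_INR | lra]).
  assert (Hn : forall n, value_within A (E0 * (/ be) ^ n)).
  { induction n as [|n IH]; [rewrite pow_O, Rmult_1_r; apply value_within_init|].
    replace (E0 * (/ be) ^ S n) with (E0 * (/ be) ^ n / be) by (simpl; field; lra).
    apply value_within_contract; [|exact IH].
    apply Rmult_le_pos; [exact HE0 | apply pow_le, Rlt_le, inv_be_range]. }
  split.
  - assert (lend - value x <= 0); [|lra].
    apply (le_0_of_geometric_bound be _ E0 be_gt1). intro n. pose proof (Hn n x Hx). lra.
  - assert (value x - (lend + 1) <= 0); [|lra].
    apply (le_0_of_geometric_bound be _ E0 be_gt1). intro n. pose proof (Hn n x Hx). lra.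
Qed.

Lemma fbeta_ge_lend d n j : alt_lyndon d -> alt_lt (expansion lend) d ->
  (-1) ^ S n * (INR (d n) - INR j) <= -1 -> fbeta be (map d (seq 0 n) ++ [j]) >= lend.
Proof.
  intros Hd Hlt Hs.
  assert (Hadm : forall m, admissible (d 0%nat) (Defs.shift d m)).
  { intro m. split.
    - intro k. pose proof (alt_le_head _ _ (Hd (m + k)%nat)) as Hk.
      unfold Defs.shift in *. now rewrite Nat.add_0_r in Hk.
    - intro k. rewrite shift_shift. right. eapply alt_lt_le_trans; [exact Hlt | apply Hd]. }
  assert (Hle : forall k, (d k <= d 0%nat)%nat) by exact (proj1 (Hadm 0%nat)).
  assert (Hv0 : lend <= value d) by exact (proj1 (admissible_value_range _ _ (Hadm 0%nat))).
  pose proof (admissible_value_range _ _ (Hadm (S n))) as Hv1.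
  pose proof (value_prefix _ d n Hle) as Hsplit.
  rewrite (value_step _ d n Hle), inv_opp_pow, Rinv_opp in Hsplit.
  unfold fbeta at 1. rewrite fbeta_from_app, length_map, length_seq. simpl (fbeta_from _ _ [j]).
  fold (fbeta be (map d (seq 0 n))).
  rewrite Rinv_mult, <- pow_inv, inv_opp_pow, Rinv_opp. simpl in Hs.
  pose proof lend_range. pose proof inv_be_range.
  assert (Hp : 0 < / be * (/ be) ^ n) by (apply Rmult_lt_0_compat; [lra | apply pow_lt; lra]).
  destruct (pow_neg1_cases n) as [s|s]; rewrite s in Hsplit, Hs |- *.
  - assert (/ be * (/ be) ^ n * (INR (d n) - INR j + value (Defs.shift d (S n))) >= 0)
      by (apply Rle_ge, Rmult_le_pos; lra).
    lra.
  - assert (/ be * (/ be) ^ n * (INR j - INR (d n) - value (Defs.shift d (S n))) >= 0)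
      by (apply Rle_ge, Rmult_le_pos; lra).
    lra.
Qed.

End Alternate_beta_transformation.

Lemma entropy_ge (H : nat -> nat) e b : 1 < b -> (forall n, b ^ n - 1 <= INR (H n)) ->
  Un_cv (fun n => ln (INR (H n)) / INR n) e -> ln b <= e.
Proof.
  intros Hb Hlow Hcv%is_lim_seq_Reals.
  assert (Hlim : is_lim_seq (fun n => ln b - ln 2 * / INR n) (ln b)).
  { assert (Hinv : is_lim_seq (fun n => ln 2 * / INR n) 0).
    { pose proof (is_lim_seq_inv _ _ is_lim_seq_INR ltac:(discriminate)) as Hl.
      apply (is_lim_seq_scal_l _ (ln 2)) in Hl.
      simpl in Hl. now rewrite Rmult_0_r in Hl. }
    pose proof (is_lim_seq_minus' _ _ _ _ (is_lim_seq_const (ln b)) Hinv) as Hl.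
    now rewrite Rminus_0_r in Hl. }
  refine (is_lim_seq_le_loc _ _ (ln b) e _ Hlim Hcv).
  destruct (pow_unbounded b 2 Hb) as [N HN]. exists (S N). intros n Hn.
  assert (Hn0 : 0 < INR n) by (apply lt_0_INR; lia).
  assert (Hbn : 2 < b ^ n) by (pose proof (Rle_pow b N n ltac:(lra) ltac:(lia)); lra).
  assert (Hln : INR n * ln b - ln 2 <= ln (INR (H n))).
  { rewrite <- ln_pow, <- ln_div by lra. apply ln_le; [|pose proof (Hlow n)]; lra. }
  apply (Rmult_le_reg_r (INR n)); [exact Hn0|].
  unfold Rdiv. rewrite Rmult_assoc, Rinv_l by lra.
  replace ((ln b - ln 2 * / INR n) * INR n) with (INR n * ln b - ln 2) by (field; lra). lra.
Qed.

Lemma fbeta_from_continuous w k y0 : y0 <> 0 -> continuity_pt (fun y => fbeta_from y k w) y0.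
Proof.
  intro Hy0. revert k. induction w as [|a w IH]; intro k; simpl.
  - apply continuity_pt_const. intros u v. reflexivity.
  - apply (continuity_pt_ext
      (plus_fct (mult_real_fct (INR a) (inv_fct (mult_real_fct ((-1) ^ k) (fun y => y ^ k))))
                (fun y => fbeta_from y (S k) w))).
    { intro y. unfold plus_fct, mult_real_fct, inv_fct.
      replace (- y) with (-1 * y) by ring. now rewrite Rpow_mult_distr. }
    apply continuity_pt_plus; [|apply IH].
    apply continuity_pt_scal, continuity_pt_inv.
    + apply continuity_pt_scal, derivable_continuous_pt, derivable_pt_pow.
    + unfold mult_real_fct. apply Rmult_integral_contrapositive. split; apply pow_nonzero; lra.
Qed.

Lemma fbeta_plus_ratio_continuous w y0 : 1 < y0 -> continuity_pt (fun y => fbeta y w + y / (y + 1)) y0.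
Proof.
  intro Hy0.
  apply (continuity_pt_ext
           (plus_fct (fun y => fbeta_from y 1 w) (div_fct id (plus_fct id (fct_cte 1)))));
    [reflexivity|].
  apply continuity_pt_plus; [apply fbeta_from_continuous; lra|].
  apply continuity_pt_div.
  - apply continuity_pt_id.
  - apply continuity_pt_plus; [apply continuity_pt_id | apply continuity_pt_const; now intros].
  - unfold plus_fct, id, fct_cte. lra.
Qed.

Lemma continuity_pt_neg_right f x : continuity_pt f x -> f x < 0 -> exists x', x < x' /\ f x' < 0.
Proof.
  intros Hc Hneg.
  destruct (Hc (- f x) ltac:(lra)) as [delta [Hdelta Hball]].
  exists (x + delta / 2). split; [lra|].
  assert (Hdist : Rdist (x + delta / 2) x < delta) by (unfold Rdist; rewrite Rabs_pos_eq; lra).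
  assert (Hne : x <> x + delta / 2) by (intro; lra).
  specialize (Hball (x + delta / 2) (conj (conj I Hne) Hdist)). simpl in Hball.
  unfold Rdist in Hball. apply Rabs_def2 in Hball. lra.
Qed.

Theorem corollary2 (d : iword) (beta : R) (i j : nat) :
  alt_lyndon d ->
  1 < beta ->
  has_entropy d (ln beta) ->
  (1 <= i)%nat ->
  inLM d (map d (seq 0 (i - 1)) ++ [j]) ->
  ((-1) ^ Z.of_nat i * (Z.of_nat (d (i - 1)%nat) - Z.of_nat j) < 0)%Z ->
  fbeta beta (map d (seq 0 (i - 1)) ++ [j]) >= - (beta / (beta + 1)).
Proof.
  intros Hd Hbeta [H [Hcount Hcv]] Hi _ Hs.
  destruct i as [|n]; [lia|]. replace (S n - 1)%nat with n in * by lia.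
  apply sign_diff_le in Hs.
  set (w := map d (seq 0 n) ++ [j]).
  apply Rnot_lt_ge. intro Hlt.
  destruct (continuity_pt_neg_right _ _ (fbeta_plus_ratio_continuous w beta Hbeta) ltac:(lra))
    as [be [Hbe Hneg]].
  cbv beta in Hneg.
  assert (Hbe1 : 1 < be) by lra.
  assert (Hcase : alt_le d (expansion be (lend be)) \/ alt_lt (expansion be (lend be)) d).
  { destruct (alt_trichotomy d (expansion be (lend be))) as [<-|[Hl|Hg]];
      [left; now left | left; now right | now right]. }
  destruct Hcase as [Hle|Hgt].
  - pose proof (entropy_ge H _ be Hbe1
                  (fun m => count_words_lower be Hbe1 d m (H m) Hle (Hcount m)) Hcv).
    assert (ln beta < ln be) by (apply ln_increasing; lra). lra.
  - pose proof (fbeta_ge_lend be Hbe1 d n j Hd Hgt Hs) as Hge. fold w in Hge. unfold lend in Hge. lra.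
Qed.
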